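(* Let $f=\frac1n\sum_{i=1}^nf_i$ with each $f_i:\mathbb{R}^d\to\mathbb{R}$ differentiable and $\nabla f_i$ $L_i$-Lipschitz. Fix a proper sampling with marginals $p_i$ and pair matrix $\mathbf P$, and $v\in\mathbb{R}^n$ with $\mathbf P-pp^\top\preceq\mathrm{Diag}(p_1v_1,\dots,p_nv_n)$, and let $Q=\sum_{i=1}^n\frac{v_iL_i^2}{p_in^2}$. For the iterates of ProxSARAH-AS (any stepsize $\eta>0$, any inner length $m$), for every $j\ge1$ and $1\le t\le m$, $$E\big[\|\mathcal V_t^{(j)}-\nabla f(x_t^{(j)})\|^2\big]\le Q\sum_{k=1}^tE\big[\|x_k^{(j)}-x_{k-1}^{(j)}\|^2\big].$$
   Context: A sampling is a random subset $S\subseteq[n]$ with $p_i=\mathrm{Prob}(i\in S)>0$ and $\mathbf P_{ij}=\mathrm{Prob}(\{i,j\}\subseteq S)$; $\preceq$ is the positive semidefinite order. $r:\mathbb{R}^d\to\mathbb{R}$ has proximal mapping $\mathrm{prox}_{\eta r}(y)=\arg\min_x\{\frac1{2\eta}\|x-y\|^2+r(x)\}$ (nonempty). ProxSARAH-AS: for $j=1,2,\dots$: $x_0^{(j)}=\tilde x^{(j)}$, $\mathcal V_0^{(j)}=\frac1n\sum_i\nabla f_i(x_0^{(j)})$, $x_1^{(j)}=x_0^{(j)}$; for $t=1,\dots,m$: draw $S_t^{(j)}$ from the sampling independently of the past, $\mathcal V_t^{(j)}=\sum_{i\in S_t^{(j)}}\frac1{np_i}(\nabla f_i(x_t^{(j)})-\nabla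 f_i(x_{t-1}^{(j)}))+\mathcal V_{t-1}^{(j)}$, $x_{t+1}^{(j)}\in\mathrm{prox}_{\eta r}(x_t^{(j)}-\eta\mathcal V_t^{(j)})$; then $\tilde x^{(j+1)}=x_{m+1}^{(j)}$. *)

From HB Require Import structures.
From mathcomp Require Import all_boot all_order all_algebra.
From mathcomp Require Import all_classical all_reals all_analysis.
Set Implicit Arguments. Unset Strict Implicit. Unset Printing Implicit Defensive.
Import Order.TTheory GRing.Theory Num.Theory.
Import numFieldNormedType.Exports.
Local Open Scope ring_scope.

Section Defs.
Variable R : realType.

Definition sqnorm d (x : 'rV[R]_d) : R := \sum_(k < d) (x 0 k) ^+ 2.
Definition enorm d (x : 'rV[R]_d) : R := Num.sqrt (sqnorm x).

Definition grad d (f : 'rV[R]_d -> R) (x : 'rV[R]_d) : 'rV[R]_d :=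
  \row_(k < d) ('d f x) (delta_mx 0 k).

Definition smooth_L d (f : 'rV[R]_d -> R) (L : R) : Prop :=
  (forall x, differentiable f x) /\
  forall x y, enorm (grad f x - grad f y) <= L * enorm (x - y).

Definition in_prox d (eta : R) (r : 'rV[R]_d -> R) (y x : 'rV[R]_d) : Prop :=
  forall z, (2 * eta)^-1 * sqnorm (x - y) + r x <= (2 * eta)^-1 * sqnorm (z - y) + r z.

Definition is_sampling n (pS : {set 'I_n} -> R) : Prop :=
  (forall A, 0 <= pS A) /\ \sum_(A : {set 'I_n}) pS A = 1.
Definition marg n (pS : {set 'I_n} -> R) (i : 'I_n) : R :=
  \sum_(A : {set 'I_n} | i \in A) pS A.
Definition pairP n (pS : {set 'I_n} -> R) : 'M[R]_n :=
  \matrix_(i, j) \sum_(A : {set 'I_n} | (i \in A) && (j \in A)) pS A.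
Definition margv n (pS : {set 'I_n} -> R) : 'cV[R]_n := \col_i marg pS i.

Definition psd n (A : 'M[R]_n) : Prop := forall h : 'cV[R]_n, 0 <= (h^T *m A *m h) 0 0.
Definition loewner_le n (A B : 'M[R]_n) : Prop := psd (B - A).

(* Expectation of a function of the first N i.i.d. draws omega 0, ..., omega (N-1)
   from the sampling pS (later draws, if accessed, are set to set0; all quantities
   below only depend on the first N draws). *)
Definition expect n (pS : {set 'I_n} -> R) (N : nat) (F : (nat -> {set 'I_n}) -> R) : R :=
  \sum_(s : {ffun 'I_N -> {set 'I_n}})
     (\prod_(k < N) pS (s k)) *
     F (fun k => if insub k is Some k' then s k' else finset.set0).

(* ProxSARAH-AS, driven by the sample stream omega: the sample S_t^{(j)}
   (j >= 1, 1 <= t <= m) is omega ((j-1)*m + (t-1)).  The element of the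
   prox set is chosen by sel, which may depend on the samples drawn so far. *)
Definition favg n d (fs : 'I_n -> 'rV[R]_d -> R) (x : 'rV[R]_d) : R :=
  n%:R^-1 * \sum_i fs i x.

Section Alg.
Variables (n d : nat) (fs : 'I_n -> 'rV[R]_d -> R) (pS : {set 'I_n} -> R)
  (r : 'rV[R]_d -> R) (eta : R) (m : nat)
  (sel : seq {set 'I_n} -> 'rV[R]_d -> 'rV[R]_d) (x1 : 'rV[R]_d)
  (omega : nat -> {set 'I_n}).

Definition avggrad (x : 'rV[R]_d) : 'rV[R]_d := n%:R^-1 *: \sum_i grad (fs i) x.

(* inner loop of outer iteration j started at xt:
   inner j xt t = (x_t, x_{t+1}, V_t) *)
Fixpoint inner (j : nat) (xt : 'rV[R]_d) (t : nat) : 'rV[R]_d * 'rV[R]_d * 'rV[R]_d :=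
  match t with
  | 0 => (xt, xt, avggrad xt)
  | t'.+1 =>
      let: (xprev, xcur, Vprev) := inner j xt t' in
      let S := omega ((j.-1) * m + t') in
      let V := \sum_(i in S) ((n%:R * marg pS i)^-1 *: (grad (fs i) xcur - grad (fs i) xprev))
               + Vprev in
      (xcur, sel (mkseq omega ((j.-1) * m + t'.+1)) (xcur - eta *: V), V)
  end.

(* starting point xtilde^{(k+1)} *)
Fixpoint xtilde_aux (k : nat) : 'rV[R]_d :=
  match k with
  | 0 => x1
  | k'.+1 => (inner k (xtilde_aux k') m).1.2
  end.
Definition xtilde (j : nat) : 'rV[R]_d := xtilde_aux j.-1.

Definition xit (j t : nat) : 'rV[R]_d := (inner j (xtilde j) t).1.1.
Definition Vit (j t : nat) : 'rV[R]_d := (inner j (xtilde j) t).2.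
End Alg.

End Defs.

(* Write e_t = V_t - grad f(x_t).  By the recursion,
     e_(t+1) = e_t + sum_(i in S) D_i - sum_i p_i D_i,
     D_i = (grad f_i(x_(t+1)) - grad f_i(x_t)) / (n p_i),
   where the sample S = S_(t+1) is independent of e_t and of the D_i, which
   only depend on S_1, ..., S_t.  Averaging over S kills the cross term, and
   the variance of sum_(i in S) D_i is D^T (P - p p^T) D <= sum_i p_i v_i |D_i|^2
   (coordinatewise), which the Lipschitz bounds and v_i >= 1 - p_i >= 0 turn
   into Q |x_(t+1) - x_t|^2.  As e_0 = 0, induction on t gives the claim.
   Neither the stepsize nor the prox property plays any role: any rule for
   x_(t+1) that only looks at S_1, ..., S_t would do. *)

From HB Require Import structures.
From mathcomp Require Import all_boot all_order all_algebra.
From mathcomp Require Import all_classical all_reals all_analysis.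
From mathcomp Require Import ring lra zify.
Import Order.TTheory GRing.Theory Num.Theory.
Import numFieldNormedType.Exports.
Set Implicit Arguments. Unset Strict Implicit.
Local Open Scope ring_scope.

Section SumInSample.
Variables (R : realType) (n : nat) (pS : {set 'I_n} -> R) (v : 'I_n -> R).

Lemma quad_formE (B : 'M[R]_n) (h : 'cV[R]_n) :
  (h^T *m B *m h) 0 0 = \sum_i \sum_j h i 0 * B i j * h j 0.
Proof.
rewrite mxE exchange_big /=; apply: eq_bigr => j _.
by rewrite mxE mulr_suml; apply: eq_bigr => i _; rewrite mxE.
Qed.

Lemma sum_sum_in_sample (h : 'I_n -> R) :
  \sum_A pS A * \sum_(i in A) h i = \sum_i marg pS i * h i.
Proof.
transitivity (\sum_(A : {set 'I_n}) \sum_i (if i \in A then pS A * h i else 0)).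
  by apply: eq_bigr => A _; rewrite mulr_sumr big_mkcond.
rewrite exchange_big; apply: eq_bigr => i _.
by rewrite /marg mulr_suml [RHS]big_mkcond.
Qed.

Lemma sum_sqr_sum_in_sample (h : 'I_n -> R) :
  \sum_A pS A * (\sum_(i in A) h i) ^+ 2 = \sum_i \sum_j h i * h j * pairP pS i j.
Proof.
transitivity (\sum_(A : {set 'I_n}) \sum_i \sum_j
    (if (i \in A) && (j \in A) then h i * h j * pS A else 0)).
  apply: eq_bigr => A _; rewrite expr2 big_distrl /= mulr_sumr big_mkcond /=.
  apply: eq_bigr => i _; case: (i \in A) => /=; last by rewrite big1.
  rewrite big_distrr mulr_sumr big_mkcond /=; apply: eq_bigr => j _.
  by case: (j \in A); rewrite ?mulr0 //; ring.
rewrite exchange_big; apply: eq_bigr => i _.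
rewrite exchange_big; apply: eq_bigr => j _.
rewrite mxE mulr_sumr [RHS]big_mkcond; apply: eq_bigr => A _.
by case: ifP.
Qed.

Hypothesis pS_sampling_le : loewner_le (pairP pS - margv pS *m (margv pS)^T)
                                       (diag_mx (\row_i (marg pS i * v i))).

Lemma sub_marg_le_weight i : 0 < marg pS i -> 1 - marg pS i <= v i.
Proof.
move=> p_gt0; have := pS_sampling_le (delta_mx i 0).
rewrite /psd trmx_delta -rowE -colE !mxE eqxx mulr1n big_ord1 !mxE.
under eq_bigl do rewrite andbb.
by rewrite -/(marg pS i) => ?; nra.
Qed.

Hypothesis pS_sum1 : \sum_A pS A = 1.

Lemma marg_le1 i : (forall A, 0 <= pS A) -> marg pS i <= 1.
Proof.
move=> pS_ge0; rewrite -pS_sum1 /marg.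
by rewrite [X in _ <= X](bigID (fun A : {set 'I_n} => i \in A)) /= lerDl sumr_ge0.
Qed.

Lemma variance_sum_in_sample_le (h : 'I_n -> R) :
  \sum_A pS A * (\sum_(i in A) h i - \sum_i marg pS i * h i) ^+ 2
  <= \sum_i marg pS i * v i * h i ^+ 2.
Proof.
set mu := \sum_i marg pS i * h i.
have := pS_sampling_le (\col_i h i).
rewrite /psd quad_formE (_ : \sum_i _ = \sum_i marg pS i * v i * h i ^+ 2
    - \sum_i \sum_j h i * h j * pairP pS i j + mu ^+ 2); last first.
  rewrite expr2 {2}/mu mulr_suml -sumrB -big_split; apply: eq_bigr => i _ /=.
  transitivity (\sum_j ((if j == i then marg pS i * v i * h i ^+ 2 else 0)
      - h i * h j * pairP pS i j + marg pS i * h i * (marg pS j * h j))).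
    apply: eq_bigr => j _; rewrite !mxE big_ord1 !mxE.
    by case: (eqVneq i j) => [<-|_]; rewrite ?eqxx ?mulr1n ?mulr0n; ring.
  by rewrite big_split sumrB /= -big_mkcond big_pred1_eq mulr_sumr.
move=> psd_h.
rewrite (eq_bigr (fun A => pS A * (\sum_(i in A) h i) ^+ 2
    - 2 * mu * (pS A * \sum_(i in A) h i) + mu ^+ 2 * pS A)); last first.
  by move=> A _; ring.
rewrite big_split sumrB /= -!mulr_sumr sum_sqr_sum_in_sample sum_sum_in_sample.
by rewrite pS_sum1 -/mu; lra.
Qed.

Lemma sqr_increment_sum_in_sample_le (e : R) (h : 'I_n -> R) :
  \sum_A pS A * ((e + (\sum_(i in A) h i - \sum_i marg pS i * h i)) ^+ 2 - e ^+ 2)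
  <= \sum_i marg pS i * v i * h i ^+ 2.
Proof.
set mu := \sum_i marg pS i * h i.
have centred : \sum_A pS A * (\sum_(i in A) h i - mu) = 0.
  rewrite (eq_bigr (fun A => pS A * \sum_(i in A) h i - mu * pS A)); last first.
    by move=> A _; ring.
  by rewrite sumrB -mulr_sumr sum_sum_in_sample pS_sum1 mulr1 subrr.
rewrite (eq_bigr (fun A => pS A * (\sum_(i in A) h i - mu) ^+ 2
    + 2 * e * (pS A * (\sum_(i in A) h i - mu)))); last by move=> A _; ring.
rewrite big_split /= -mulr_sumr centred mulr0 addr0.
exact: variance_sum_in_sample_le.
Qed.

Lemma sqnorm_increment_sum_in_sample_le d (e : 'rV[R]_d) (D : 'I_n -> 'rV[R]_d) :
  \sum_A pS A * (sqnorm (e + (\sum_(i in A) D i - \sum_i marg pS i *: D i)) - sqnorm e)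
  <= \sum_i marg pS i * v i * sqnorm (D i).
Proof.
rewrite /sqnorm.
under eq_bigr => A _ do rewrite -sumrB mulr_sumr.
under [X in _ <= X]eq_bigr => i _ do rewrite mulr_sumr.
rewrite exchange_big [X in _ <= X]exchange_big /=; apply: ler_sum => k _.
have := sqr_increment_sum_in_sample_le (e 0 k) (fun i => D i 0 k).
congr (_ <= _); apply: eq_bigr => A _.
rewrite !mxE !summxE; congr (_ * ((_ + (_ - _)) ^+ 2 - _)).
  by apply: eq_bigr => i _; rewrite mxE.
Qed.

End SumInSample.

Definition redraw T (om : nat -> T) (M : nat) (A : T) : nat -> T :=
  fun k => if k == M then A else om k.

Section Expectation.
Variables (R : realType) (n : nat) (pS : {set 'I_n} -> R) (N : nat).
Implicit Types F G : (nat -> {set 'I_n}) -> R.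

Lemma eq_expect F G : F =1 G -> expect pS N F = expect pS N G.
Proof. by move=> FG; apply: eq_bigr => s _; rewrite FG. Qed.

Lemma expect0 : expect pS N (fun _ => 0) = 0.
Proof. by rewrite /expect big1 // => s _; rewrite mulr0. Qed.

Lemma expectD F G :
  expect pS N (fun om => F om + G om) = expect pS N F + expect pS N G.
Proof. by rewrite /expect -big_split; apply: eq_bigr => s _; rewrite mulrDr. Qed.

Lemma expectZ c F : expect pS N (fun om => c * F om) = c * expect pS N F.
Proof. by rewrite /expect mulr_sumr; apply: eq_bigr => s _; rewrite mulrCA. Qed.

Lemma ler_expect F G : (forall A, 0 <= pS A) -> (forall om, F om <= G om) ->
  expect pS N F <= expect pS N G.
Proof.
move=> pS_ge0 FG; apply: ler_sum => s _; apply: ler_wpM2l => //.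
exact: prodr_ge0.
Qed.

Lemma expect_redraw F M : (M < N)%N -> \sum_A pS A = 1 ->
  expect pS N F = expect pS N (fun om => \sum_A pS A * F (redraw om M A)).
Proof.
move=> lt_MN pS_sum1; pose Mo : 'I_N := Ordinal lt_MN.
pose stream (s : {ffun 'I_N -> {set 'I_n}}) k :=
  if insub k is Some k' then s k' else finset.set0.
pose upd (s : {ffun 'I_N -> {set 'I_n}}) A : {ffun 'I_N -> {set 'I_n}} :=
  [ffun k => if k == Mo then A else s k].
have redraw_stream s A : redraw (stream s) M A = stream (upd s A).
  apply/funext => k; rewrite /redraw /stream; case: insubP => [k' _ <-|/negP Nk].
    by rewrite ffunE.
  by case: eqP => // kM; case: Nk; rewrite kM.
pose h (p : {ffun 'I_N -> {set 'I_n}} * {set 'I_n}) :=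
  (\prod_(k < N) pS (p.1 k)) * pS p.2 * F (stream p.1).
(* Exchanging the fresh draw with the M-th one preserves the product measure. *)
pose swap (p : {ffun 'I_N -> {set 'I_n}} * {set 'I_n}) := (upd p.1 p.2, p.1 Mo).
have swapK : involutive swap.
  case=> s A; rewrite /swap /= /upd ffunE eqxx; congr (_, _).
  by apply/ffunP => k; rewrite !ffunE; case: eqP => // ->.
rewrite /expect; transitivity (\sum_p h p).
  rewrite -(pair_bigA _ (fun s B => h (s, B))) /h /=; apply: eq_bigr => s _.
  by rewrite -[LHS]mulr1 -pS_sum1 mulr_sumr; apply: eq_bigr => B _; rewrite mulrAC.
rewrite (reindex_inj (inv_inj swapK)) -(pair_bigA _ (fun s B => h (swap (s, B)))).
apply: eq_bigr => s _; rewrite mulr_sumr; apply: eq_bigr => A _.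
rewrite /h /swap /= -redraw_stream mulrA; congr (_ * _).
rewrite (bigD1 Mo) //= [in RHS](bigD1 Mo) //= /upd ffunE eqxx.
rewrite (eq_bigr (fun k => pS (s k))) => [|k /negbTE kM]; last by rewrite ffunE kM.
by rewrite mulrC mulrAC mulrA.
Qed.

End Expectation.

Section Gradients.
Variables (R : realType) (d : nat).
Implicit Types x y : 'rV[R]_d.

Lemma sqnorm_ge0 x : 0 <= sqnorm x.
Proof. by apply: sumr_ge0 => k _; exact: sqr_ge0. Qed.

Lemma sqnormZ c x : sqnorm (c *: x) = c ^+ 2 * sqnorm x.
Proof. by rewrite /sqnorm mulr_sumr; apply: eq_bigr => k _; rewrite mxE exprMn. Qed.

Lemma sqnorm_grad_sub_le f L x y : smooth_L f L ->
  sqnorm (grad f x - grad f y) <= L ^+ 2 * sqnorm (x - y).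
Proof.
case=> _ /(_ x y) lip; rewrite /enorm in lip.
have norm_ge0 := sqrtr_ge0 (sqnorm (grad f x - grad f y)).
rewrite -(sqr_sqrtr (sqnorm_ge0 (grad f x - grad f y))).
rewrite -(sqr_sqrtr (sqnorm_ge0 (x - y))) -exprMn.
by apply: lerXn2r => //; rewrite nnegrE //; exact: le_trans lip.
Qed.

Lemma is_diff_sum (V W : normedModType R) n (f df : 'I_n -> V -> W) (a : V) :
  (forall i, is_diff a (f i) (df i)) -> is_diff a (\sum_i f i) (\sum_i df i).
Proof.
move=> dfa; elim/big_rec2: _ => [|i g dg _ IH]; first exact: is_diff_cst.
exact: is_diffD.
Qed.

Lemma grad_favg n (fs : 'I_n -> 'rV[R]_d -> R) x :
  (forall i, differentiable (fs i) x) ->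
  grad (favg fs) x = n%:R^-1 *: \sum_i grad (fs i) x.
Proof.
move=> dfs; have dfsx i : is_diff x (fs i) ('d (fs i) x) by apply: DiffDef.
have -> : favg fs = n%:R^-1 *: \sum_i fs i.
  by apply/funext => y; rewrite /favg fct_sumE.
have dF := is_diffZ n%:R^-1 (is_diff_sum dfsx).
apply/rowP => k; rewrite !mxE (diff_val (is_diff_def := dF)) /= fct_sumE summxE.
congr (_ * _).
by apply: eq_bigr => i _; rewrite mxE.
Qed.

End Gradients.

Section Causality.
Variables (R : realType) (n d : nat) (fs : 'I_n -> 'rV[R]_d -> R) (pS : {set 'I_n} -> R)
  (eta : R) (m : nat) (sel : seq {set 'I_n} -> 'rV[R]_d -> 'rV[R]_d) (x1 : 'rV[R]_d).

Lemma inner_eq_prefix om om' j xt t :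
  (forall i, (i < j.-1 * m + t)%N -> om i = om' i) ->
  inner fs pS eta m sel om j xt t = inner fs pS eta m sel om' j xt t.
Proof.
elim: t => [//|t IH] eq_om /=.
rewrite IH => [|i lt_i]; last by apply: eq_om; lia.
case: (inner fs pS eta m sel om' j xt t) => [[a b] c].
rewrite (eq_om (j.-1 * m + t)%N); last by lia.
suff -> : mkseq om (j.-1 * m + t.+1) = mkseq om' (j.-1 * m + t.+1) by [].
by apply/eq_in_map => i; rewrite mem_iota => /andP[_ lt_i]; apply: eq_om.
Qed.

Lemma xtilde_aux_eq_prefix om om' k :
  (forall i, (i < k * m)%N -> om i = om' i) ->
  xtilde_aux fs pS eta m sel x1 om k = xtilde_aux fs pS eta m sel x1 om' k.
Proof.
elim: k => [//|k IH] eq_om /=.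
rewrite IH => [|i lt_i]; last by apply: eq_om; lia.
by rewrite (@inner_eq_prefix om om') // => i /= lt_i; apply: eq_om; lia.
Qed.

End Causality.

Section ErrorRecursion.
Variables (R : realType) (n d : nat) (fs : 'I_n -> 'rV[R]_d -> R) (L : 'I_n -> R)
  (pS : {set 'I_n} -> R) (v : 'I_n -> R) (eta : R) (m : nat)
  (sel : seq {set 'I_n} -> 'rV[R]_d -> 'rV[R]_d) (x1 : 'rV[R]_d).
Hypotheses (fs_smooth : forall i, smooth_L (fs i) (L i))
  (pS_ge0 : forall A, 0 <= pS A) (pS_sum1 : \sum_A pS A = 1)
  (marg_gt0 : forall i, 0 < marg pS i)
  (pS_sampling_le : loewner_le (pairP pS - margv pS *m (margv pS)^T)
                               (diag_mx (\row_i (marg pS i * v i)))).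
Variable j : nat.

Local Notation run om := (inner fs pS eta m sel om j (xtilde fs pS eta m sel x1 om j)).
Local Notation x om t := (xit fs pS eta m sel x1 om j t).
Local Notation V om t := (Vit fs pS eta m sel x1 om j t).
Local Notation err om t := (V om t - grad (favg fs) (x om t)).
Local Notation dgrad om t i :=
  ((n%:R * marg pS i)^-1 *: (grad (fs i) (x om t.+1) - grad (fs i) (x om t))).
Local Notation Q := (\sum_i (v i * L i ^+ 2 / (marg pS i * n%:R ^+ 2))).

Lemma run_redraw om M A t : (j.-1 * m + t <= M)%N ->
  run (redraw om M A) t = run om t.
Proof.
move=> le_tM; have eq_om i : (i < M)%N -> redraw om M A i = om i.
  by rewrite /redraw; case: eqP => // ->; rewrite ltnn.
have -> : xtilde fs pS eta m sel x1 (redraw om M A) j = xtilde fs pS eta m sel x1 om j.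
  by apply: xtilde_aux_eq_prefix => i lt_i; apply: eq_om; lia.
by apply: inner_eq_prefix => i lt_i; apply: eq_om; lia.
Qed.

Lemma xit_succ om t : x om t.+1 = (run om t).1.2.
Proof. by rewrite /xit /=; case: inner => [[]]. Qed.

Lemma err_succ om t :
  err om t.+1 = err om t +
    (\sum_(i in om (j.-1 * m + t)%N) dgrad om t i - \sum_i marg pS i *: dgrad om t i).
Proof.
have -> : V om t.+1 = \sum_(i in om (j.-1 * m + t)%N) dgrad om t i + V om t.
  by rewrite /Vit /xit /=; case: inner => [[]].
have -> : \sum_i marg pS i *: dgrad om t i =
    grad (favg fs) (x om t.+1) - grad (favg fs) (x om t).
  rewrite !grad_favg => [|i|i]; try exact: (fs_smooth i).1.
  rewrite -scalerBr -sumrB scaler_sumr; apply: eq_bigr => i _.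
  rewrite scalerA invfM mulrCA mulfV ?mulr1 //; exact: lt0r_neq0.
by rewrite opprB addrCA (addrA (err om t)) subrK addrA.
Qed.

Lemma expect_err_increment_le t N : (j.-1 * m + t < N)%N ->
  expect pS N (fun om => sqnorm (err om t.+1) - sqnorm (err om t))
  <= Q * expect pS N (fun om => sqnorm (x om t.+1 - x om t)).
Proof.
move=> lt_tN; rewrite -expectZ (expect_redraw _ lt_tN pS_sum1).
apply: ler_expect => // om; set M := (j.-1 * m + t)%N.
have redraw_err A :
    sqnorm (err (redraw om M A) t.+1) - sqnorm (err (redraw om M A) t) =
    sqnorm (err om t + (\sum_(i in A) dgrad om t i
                        - \sum_i marg pS i *: dgrad om t i)) - sqnorm (err om t).
  have x_t : x (redraw om M A) t = x om t by rewrite /xit run_redraw.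
  have x_succ : x (redraw om M A) t.+1 = x om t.+1 by rewrite !xit_succ run_redraw.
  have V_t : V (redraw om M A) t = V om t by rewrite /Vit run_redraw.
  by rewrite err_succ x_t x_succ V_t /redraw eqxx.
under eq_bigr => A _ do rewrite redraw_err.
apply: le_trans (sqnorm_increment_sum_in_sample_le pS_sampling_le pS_sum1 _ _) _.
rewrite mulr_suml; apply: ler_sum => i _; rewrite sqnormZ.
have n_neq0 : n%:R != 0 :> R by rewrite pnatr_eq0 -lt0n (leq_ltn_trans _ (ltn_ord i)).
have p_gt0 := marg_gt0 i.
have v_ge0 : 0 <= v i.
  have := sub_marg_le_weight pS_sampling_le p_gt0.
  have := marg_le1 pS_sum1 i pS_ge0; lra.
have c_ge0 : 0 <= v i / (marg pS i * n%:R ^+ 2).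
  by apply: divr_ge0 => //; apply: mulr_ge0; [exact: ltW | exact: sqr_ge0].
rewrite [X in X <= _](_ : _ = v i / (marg pS i * n%:R ^+ 2)
    * sqnorm (grad (fs i) (x om t.+1) - grad (fs i) (x om t))); last first.
  by field; rewrite n_neq0 lt0r_neq0.
rewrite [X in _ <= X](_ : _ = v i / (marg pS i * n%:R ^+ 2)
    * (L i ^+ 2 * sqnorm (x om t.+1 - x om t))); last by ring.
exact/ler_wpM2l/sqnorm_grad_sub_le.
Qed.

Lemma expect_sqnorm_err_le t N : (j.-1 * m + t <= N)%N ->
  expect pS N (fun om => sqnorm (err om t))
  <= Q * \sum_(1 <= k < t.+1) expect pS N (fun om => sqnorm (x om k - x om k.-1)).
Proof.
elim: t => [|t IH] le_tN.
  suff -> : expect pS N (fun om => sqnorm (err om 0)) = expect pS N (fun=> 0).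
    by rewrite expect0 big_geq ?mulr0.
  apply: eq_expect => om; rewrite /Vit /xit /= /avggrad grad_favg => [|i].
    by rewrite subrr /sqnorm big1 // => k _; rewrite mxE expr0n.
  exact: (fs_smooth i).1.
have -> : expect pS N (fun om => sqnorm (err om t.+1)) =
    expect pS N (fun om =>
      sqnorm (err om t) + (sqnorm (err om t.+1) - sqnorm (err om t))).
  by apply: eq_expect => om; rewrite subrKC.
rewrite big_nat_recr //= mulrDr expectD lerD ?IH ?expect_err_increment_le //; lia.
Qed.

End ErrorRecursion.

Theorem lemma5p1 (R : realType) (n d : nat)
  (fs : 'I_n -> 'rV[R]_d -> R) (L : 'I_n -> R)
  (pS : {set 'I_n} -> R) (v : 'I_n -> R)
  (r : 'rV[R]_d -> R) (eta : R) (m : nat)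
  (sel : seq {set 'I_n} -> 'rV[R]_d -> 'rV[R]_d) (x1 : 'rV[R]_d) :
  (forall i, smooth_L (fs i) (L i)) ->
  is_sampling pS ->
  (forall i, 0 < marg pS i) ->
  loewner_le (pairP pS - margv pS *m (margv pS)^T)
             (diag_mx (\row_i (marg pS i * v i))) ->
  0 < eta ->
  (forall h y, in_prox eta r y (sel h y)) ->
  forall j t, (1 <= j)%N -> (1 <= t <= m)%N ->
  let N := ((j.-1) * m + t)%N in
  let Q := \sum_i (v i * L i ^+ 2 / (marg pS i * n%:R ^+ 2)) in
  expect pS N (fun om =>
     sqnorm (Vit fs pS eta m sel x1 om j t - grad (favg fs) (xit fs pS eta m sel x1 om j t)))
  <= Q * \sum_(1 <= k < t.+1)
        expect pS N (fun om =>
          sqnorm (xit fs pS eta m sel x1 om j k - xit fs pS eta m sel x1 om j k.-1)).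
Proof.
move=> fs_smooth [pS_ge0 pS_sum1] marg_gt0 pS_sampling_le _ _ j t _ _ /=.
exact: expect_sqnorm_err_le.
Qed.
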